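(* Let $\mathfrak{M}=(V,\langle\cdot,\cdot\rangle,A)$ be a model. (1) $\mathfrak{M}$ is Einstein if and only if $\mathfrak{M}$ is a simple Jacobi--Ricci commuting model with $\operatorname{Spec}(\rho)=\{a_1\}$ for some real $a_1$. (2) Let $\mathfrak{M}$ be a simple Jacobi--Ricci commuting model which is not Einstein, so that $\operatorname{Spec}(\rho)=\{a_1\pm a_2\sqrt{-1}\}$ with $a_1\in\mathbb{R}$, $a_2>0$. Set $J:=a_2^{-1}\{\rho-a_1\operatorname{id}\}$. Then $J$ is self-adjoint with respect to $\langle\cdot,\cdot\rangle$, $J^2=-\operatorname{id}$ (i.e. $J$ is a complex structure on $V$), $A(Jx,y,z,w)=A(x,Jy,z,w)=A(x,y,Jz,w)=A(x,y,z,Jw)$ for all $x,y,z,w\in V$, and $\rho=a_1\operatorname{id}+a_2J$.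
   Context: A model is a triple $\mathfrak{M}=(V,\langle\cdot,\cdot\rangle,A)$ where $V$ is a finite-dimensional real vector space, $\langle\cdot,\cdot\rangle$ is a non-degenerate symmetric bilinear form (inner product) of some signature $(p,q)$ on $V$, and $A\in\otimes^4V^*$ is an algebraic curvature tensor, i.e. $A(v_1,v_2,v_3,v_4)=-A(v_2,v_1,v_3,v_4)=A(v_3,v_4,v_1,v_2)$ and $A(v_1,v_2,v_3,v_4)+A(v_2,v_3,v_1,v_4)+A(v_3,v_1,v_2,v_4)=0$. The Jacobi operator $\mathcal{J}(x)$, curvature operator $\mathcal{R}(x,y)$ and Ricci operator $\rho$ are defined by $\langle\mathcal{J}(x)y,z\rangle=A(y,x,x,z)$, $\langle\mathcal{R}(x,y)z,w\rangle=A(x,y,z,w)$, and $\langle\rho x,y\rangle=\operatorname{Tr}\{z\mapsto\frac12\mathcal{R}(z,x)y+\frac12\mathcal{R}(z,y)x\}$. $\mathfrak{M}$ is Einstein if $\rho=a\operatorname{id}$ for some $a\in\mathbb{R}$. $\mathfrak{M}$ is Jacobi--Ricci commuting if $\mathcal{J}(v)\rho=\rho\mathcal{J}(v)$ for all $v\in V$; it is known that this is equivalent to $A(\rho v_1,v_2,v_3,v_4)=A(v_1,\rho v_2,v_3,v_4)=A(v_1,v_2,\rho v_3,v_4)=A(v_1,v_2,v_3,\rho v_4)$ for all $v_i\in V$. $\mathfrak{M}$ is a simple Jacobi--Ricci commuting model if it is Jacobi--Ricci commuting, $\rho$ is complex diagonalizable, and either $\operatorname{Spec}(\rho)=\{a_1\}$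 or $\operatorname{Spec}(\rho)=\{a_1\pm a_2\sqrt{-1}\}$ with $a_2>0$ (spectrum taken in $\mathbb{C}$). *)

From HB Require Import structures.
From mathcomp Require Import all_boot all_order all_algebra.
From mathcomp Require Import reals.
From mathcomp Require Import complex.
Set Implicit Arguments. Unset Strict Implicit. Unset Printing Implicit Defensive.
Import Order.TTheory GRing.Theory Num.Theory.
Local Open Scope ring_scope.

(* V = R^n, vectors are row vectors 'rV[R]_n; a linear endomorphism T is
   represented by a matrix M acting on the right: T v = v *m M. *)

Section Model.
Variables (R : realType) (n : nat).
Local Notation V := 'rV[R]_n.

Definition bvec (i : 'I_n) : V := delta_mx 0 i.

Definition ip (G : 'M[R]_n) (u v : V) : R := (u *m G *m v^T) 0 0.

(* a 4-tensor in (x)^4 V^*, given by its components in the standard basis,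
   evaluated (multilinearly) on four vectors *)
Definition tensor4 := 'I_n -> 'I_n -> 'I_n -> 'I_n -> R.

Definition Aev (A : tensor4) (x y z w : V) : R :=
  \sum_(i < n) \sum_(j < n) \sum_(k < n) \sum_(l < n)
     x 0 i * y 0 j * z 0 k * w 0 l * A i j k l.

(* non-degenerate symmetric bilinear form (any signature) *)
Definition inner_product (G : 'M[R]_n) : Prop := G^T = G /\ G \in unitmx.

Definition algebraic_curvature_tensor (A : tensor4) : Prop :=
  (forall v1 v2 v3 v4, Aev A v1 v2 v3 v4 = - Aev A v2 v1 v3 v4) /\
  (forall v1 v2 v3 v4, Aev A v1 v2 v3 v4 = Aev A v3 v4 v1 v2) /\
  (forall v1 v2 v3 v4,
      Aev A v1 v2 v3 v4 + Aev A v2 v3 v1 v4 + Aev A v3 v1 v2 v4 = 0).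

Definition is_model (G : 'M[R]_n) (A : tensor4) : Prop :=
  inner_product G /\ algebraic_curvature_tensor A.

(* Jacobi operator: <J(x) y, z> = A(y, x, x, z) *)
Definition jacobi (G : 'M[R]_n) (A : tensor4) (x : V) : 'M[R]_n :=
  (\matrix_(i, j) Aev A (bvec i) x x (bvec j)) *m invmx G.

(* curvature operator: <R(x,y) z, w> = A(x, y, z, w) *)
Definition curv (G : 'M[R]_n) (A : tensor4) (x y : V) : 'M[R]_n :=
  (\matrix_(i, j) Aev A x y (bvec i) (bvec j)) *m invmx G.

(* Tr { z |-> 1/2 R(z,x) y + 1/2 R(z,y) x }, trace computed in the standard basis *)
Definition ricci_form (G : 'M[R]_n) (A : tensor4) (x y : V) : R :=
  \sum_(i < n) (2^-1 * (y *m curv G A (bvec i) x) 0 i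
               + 2^-1 * (x *m curv G A (bvec i) y) 0 i).

(* Ricci operator: <rho x, y> = ricci_form x y *)
Definition ricci (G : 'M[R]_n) (A : tensor4) : 'M[R]_n :=
  (\matrix_(i, j) ricci_form G A (bvec i) (bvec j)) *m invmx G.

Definition einstein (G : 'M[R]_n) (A : tensor4) : Prop :=
  exists a : R, ricci G A = a%:M.

Definition jacobi_ricci_commuting (G : 'M[R]_n) (A : tensor4) : Prop :=
  forall v : V, jacobi G A v *m ricci G A = ricci G A *m jacobi G A v.

Definition ricciC (G : 'M[R]_n) (A : tensor4) : 'M[R[i]]_n :=
  map_mx (fun r : R => (r%:C)%C) (ricci G A).

Definition spec_single (G : 'M[R]_n) (A : tensor4) (a1 : R) : Prop :=
  forall l : R[i], eigenvalue (ricciC G A) l <-> l = (a1%:C)%C.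

Definition spec_pair (G : 'M[R]_n) (A : tensor4) (a1 a2 : R) : Prop :=
  forall l : R[i], eigenvalue (ricciC G A) l <->
     (l = (a1 +i* a2)%C \/ l = (a1 -i* a2)%C).

Definition complex_diagonalizable (G : 'M[R]_n) (A : tensor4) : Prop :=
  exists2 P : 'M[R[i]]_n, P \in unitmx &
    is_diag_mx (P *m ricciC G A *m invmx P).

Definition simple_JRC (G : 'M[R]_n) (A : tensor4) : Prop :=
  jacobi_ricci_commuting G A /\ complex_diagonalizable G A /\
  ((exists a1 : R, spec_single G A a1) \/
   (exists a1 a2 : R, 0 < a2 /\ spec_pair G A a1 a2)).

End Model.

From HB Require Import structures.
From mathcomp Require Import all_boot all_order all_algebra.
From mathcomp Require Import reals complex.
From mathcomp Require Import ring lra.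
Set Implicit Arguments.
Unset Strict Implicit.
Unset Printing Implicit Defensive.
Import Order.TTheory GRing.Theory Num.Theory.
Local Open Scope ring_scope.

(* Jacobi-Ricci commuting means A(rho x, v, v, w) = A(x, v, v, rho w).  Polarized,
   this says that the tensor Q(x, y, z, w) := A(x, y, z, rho w), which is
   antisymmetric in its first two slots and satisfies the Bianchi identity in its
   first three, has a polarized Jacobi form symmetric in the outer slots; such a
   Q is invariant under reversing its arguments, i.e. A(rho x, y, z, w) =
   A(x, y, z, rho w), and by the curvature symmetries rho then moves freely
   between all four slots.  This persists for every affine expression c (rho - a),
   in particular for J.  Since rho is diagonalizable over C, it is annihilated by
   any real polynomial vanishing on its spectrum: X - a1 in the Einstein case,
   (X - a1)^2 + a2^2 otherwise, which gives rho = a1 and J^2 = -1. *)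

Section ReversalSymmetry.
Variables (R : realFieldType) (T : Type) (Q : T -> T -> T -> T -> R).
Hypothesis Q_anti : forall x y z w, Q x y z w = - Q y x z w.
Hypothesis Q_bianchi : forall x y z w, Q x y z w + Q y z x w + Q z x y w = 0.
Hypothesis Q_polar_sym :
  forall x y z w, Q x y z w + Q x z y w = Q w y z x + Q w z y x.

Let E x y z w := Q w z y x - Q x y z w.

(* [E x] is odd under the 3-cycle of its last three arguments, a permutation of
   order three, so [E = - E]. *)
Let E_cycle x y z w : E x y z w = - E x z w y.
Proof.
rewrite /E.
have := Q_polar_sym x y z w; have := Q_polar_sym x z w y;
have := Q_polar_sym y x z w.
have := Q_anti y w z x; have := Q_anti x w z y; have := Q_anti x z y w;
have := Q_anti y z w x; have := Q_anti x z w y; have := Q_anti x y z w.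
have := Q_bianchi x w z y; have := Q_bianchi y w z x; have := Q_bianchi x y z w.
lra.
Qed.

Lemma reverse_of_polar_sym x y z w : Q x y z w = Q w z y x.
Proof.
suff: E x y z w = 0 by rewrite /E => /eqP; rewrite subr_eq0 => /eqP.
have := E_cycle x y z w; have := E_cycle x z w y; have := E_cycle x w y z.
lra.
Qed.
End ReversalSymmetry.

Section CurvatureTensor.
Variables (R : realFieldType) (V : lmodType R) (f : V -> V -> V -> V -> R).
Hypothesis f_anti : forall x y z w, f x y z w = - f y x z w.
Hypothesis f_pair : forall x y z w, f x y z w = f z w x y.
Hypothesis f_bianchi : forall x y z w, f x y z w + f y z x w + f z x y w = 0.
Hypothesis f_linear1 : forall a x u y z w, f (a *: x + u) y z w = a * f x y z w + f u y z w.

Lemma f_anti34 x y z w : f x y z w = - f x y w z.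
Proof. by rewrite f_pair f_anti (f_pair w). Qed.

Lemma f_reverse x y z w : f x y z w = f w z y x.
Proof. by rewrite f_anti f_anti34 opprK f_pair. Qed.

Lemma f_add1 x u y z w : f (x + u) y z w = f x y z w + f u y z w.
Proof. by have := f_linear1 1 x u y z w; rewrite scale1r mul1r. Qed.

Lemma f_add2 x y u z w : f x (y + u) z w = f x y z w + f x u z w.
Proof. by rewrite (f_anti x) f_add1 opprD -(f_anti x) -(f_anti x). Qed.

Lemma f_add3 x y z u w : f x y (z + u) w = f x y z w + f x y u w.
Proof. by rewrite (f_pair x) f_add1 (f_pair z) (f_pair u). Qed.

Lemma f_linear4 a x u y z w : f y z w (a *: x + u) = a * f y z w x + f y z w u.
Proof. by rewrite (f_reverse y) f_linear1 (f_reverse x) (f_reverse u). Qed.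

Lemma f0_1 y z w : f 0 y z w = 0.
Proof. by have := f_linear1 (-1) y y y z w; rewrite scaleN1r addNr mulN1r addNr. Qed.

Lemma f_scale1 a x y z w : f (a *: x) y z w = a * f x y z w.
Proof. by have := f_linear1 a x 0 y z w; rewrite !addr0 f0_1 addr0. Qed.

Lemma f_scale4 a x y z w : f y z w (a *: x) = a * f y z w x.
Proof. by rewrite (f_reverse y) f_scale1 -f_reverse. Qed.

Lemma f_sum1 (I : Type) (r : seq I) (P : pred I) (c : I -> R) (v : I -> V) y z w :
  f (\sum_(i <- r | P i) c i *: v i) y z w = \sum_(i <- r | P i) c i * f (v i) y z w.
Proof. by elim/big_rec2: _ => [|i a b _ <-]; rewrite ?f0_1 ?f_linear1. Qed.

Lemma f_sum4 (I : Type) (r : seq I) (P : pred I) (c : I -> R) (v : I -> V) x y z :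
  f x y z (\sum_(i <- r | P i) c i *: v i) = \sum_(i <- r | P i) c i * f x y z (v i).
Proof.
by rewrite f_reverse f_sum1; apply: eq_bigr => i _; rewrite -f_reverse.
Qed.

Section Endomorphism.
Variable N : V -> V.

Lemma curvature_commute_of_jacobi :
    (forall x v w, f (N x) v v w = f x v v (N w)) ->
  forall x y z w, f (N x) y z w = f x y z (N w).
Proof.
move=> NJ x y z w.
have polar a b c d : f (N a) b c d + f (N a) c b d = f a b c (N d) + f a c b (N d).
  by have := NJ a (b + c) d; have := NJ a b d; have := NJ a c d;
    rewrite !f_add2 !f_add3; lra.
have rev a b c d : f a b c (N d) = f d c b (N a).
  apply: (@reverse_of_polar_sym _ _ (fun a b c d => f a b c (N d))) => {a b c d}.
  - by move=> a b c d; exact: f_anti.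
  - by move=> a b c d; exact: f_bianchi.
  by move=> a b c d; rewrite (f_reverse a) (f_reverse a c) polar addrC.
by rewrite (f_reverse (N x)) rev.
Qed.

Hypothesis fN : forall x y z w, f (N x) y z w = f x y z (N w).

Lemma commute_affine c d x y z w :
  f (c *: N x + d *: x) y z w = f x y z (c *: N w + d *: w).
Proof. by rewrite f_linear1 f_scale1 f_linear4 f_scale4 fN. Qed.

Lemma commute_all_slots x y z w :
  [/\ f (N x) y z w = f x (N y) z w, f x (N y) z w = f x y (N z) w
    & f x y (N z) w = f x y z (N w)].
Proof.
have slot2 : f x (N y) z w = f x y z (N w) by rewrite f_anti fN -f_anti.
have slot3 : f x y (N z) w = f (N x) y z w by rewrite f_anti34 -fN -f_anti34.
by split; rewrite ?slot2 ?slot3 ?fN.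
Qed.
End Endomorphism.
End CurvatureTensor.

Section Diagonalizable.
Variable F : fieldType.

Lemma eigenvalue_diag_mx n (d : 'rV[F]_n) i : eigenvalue (diag_mx d) (d 0 i).
Proof.
apply/eigenvalueP; exists (delta_mx 0 i); first by rewrite -rowE row_diag_mx.
by apply/eqP => /matrixP/(_ 0 i)/eqP; rewrite !mxE !eqxx oner_eq0.
Qed.

Lemma eigenvalue_scalar_mx n (a l : F) : eigenvalue (a%:M : 'M_n.+1) l = (l == a).
Proof.
apply/idP/eqP => [/eigenvalueP[v] | ->]; last first.
  by have := eigenvalue_diag_mx (const_mx a : 'rV_n.+1) ord0; rewrite mxE diag_const_mx.
rewrite mul_mx_scalar => /eqP; rewrite -subr_eq0 -scalerBl scaler_eq0 subr_eq0.
by case/orP => [/eqP-> | ->].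
Qed.

Lemma horner_mx_diagonalizable n (M P : 'M[F]_n.+1) (p : {poly F}) :
    P \in unitmx -> is_diag_mx (P *m M *m invmx P) ->
    (forall l, eigenvalue M l -> root p l) ->
  horner_mx M p = 0.
Proof.
move=> Pu /diag_mxP[d Md] p_roots.
have d_roots i : root p (d 0 i).
  apply/p_roots/(eigenvalue_conjmx (stablemx_unit M Pu)); first by rewrite row_free_unit.
  by rewrite conjumx // Md; exact: eigenvalue_diag_mx.
have : P *m horner_mx M p *m invmx P = 0.
  rewrite -horner_mx_uconj // Md horner_mx_diag; apply/matrixP => i j.
  by rewrite !mxE (rootP (d_roots i)) mul0rn.
move/(congr1 (fun X => invmx P *m X *m P)).
by rewrite !mulmxA mulVmx // mul1mx mulmxKV // mulmx0 mul0mx.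
Qed.
End Diagonalizable.

Lemma mulmx_affine (R : comNzRingType) n (M : 'M[R]_n) c a (u : 'rV_n) :
  u *m (c *: (M - a%:M)) = c *: (u *m M) + (- (c * a)) *: u.
Proof. by rewrite -scalemxAr mulmxBr mul_mx_scalar scalerBr scalerA scaleNr. Qed.

Section Model.
Variables (R : realType) (n : nat) (G : 'M[R]_n) (A : tensor4 R n).
Hypotheses (G_sym : G^T = G) (G_unit : G \in unitmx).
Hypothesis A_act : algebraic_curvature_tensor A.
Local Notation rho := (ricci G A).

Lemma Aev_linear1 a x u y z w :
  Aev A (a *: x + u) y z w = a * Aev A x y z w + Aev A u y z w.
Proof.
rewrite /Aev !mulr_sumr -big_split; apply: eq_bigr => i _.
rewrite !mulr_sumr -big_split; apply: eq_bigr => j _.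
rewrite !mulr_sumr -big_split; apply: eq_bigr => k _.
rewrite !mulr_sumr -big_split; apply: eq_bigr => l _.
by rewrite !mxE /=; ring.
Qed.

Let A_anti := A_act.1.
Let A_pair := A_act.2.1.
Let A_bianchi := A_act.2.2.

Lemma Aev_sum_bvec1 x y z w : Aev A x y z w = \sum_i x 0 i * Aev A (bvec R i) y z w.
Proof. by rewrite {1}(row_sum_delta x) (f_sum1 Aev_linear1). Qed.

Lemma Aev_sum_bvec4 x y z w : Aev A y z w x = \sum_i x 0 i * Aev A y z w (bvec R i).
Proof. by rewrite {1}(row_sum_delta x) (f_sum4 A_anti A_pair Aev_linear1). Qed.

Lemma ip_mulmx_invmx (M : 'M[R]_n) u v :
  ip G (u *m (M *m invmx G)) v = (u *m M *m v^T) 0 0.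
Proof. by rewrite /ip !mulmxA -(mulmxA _ (invmx G)) mulVmx // mulmx1. Qed.

Lemma ip_sym u v : ip G u v = ip G v u.
Proof.
rewrite /ip; transitivity (((u *m G *m v^T)^T) 0 0); first by rewrite [RHS]mxE.
by rewrite !trmx_mul trmxK G_sym mulmxA.
Qed.

Lemma ip_jacobi v y z : ip G (y *m jacobi G A v) z = Aev A y v v z.
Proof.
rewrite /jacobi ip_mulmx_invmx mxE.
under eq_bigr => j _ do rewrite !mxE big_distrl /=.
rewrite exchange_big Aev_sum_bvec1; apply: eq_bigr => i _.
rewrite Aev_sum_bvec4 mulr_sumr; apply: eq_bigr => j _; rewrite !mxE; ring.
Qed.

Lemma ip_linear a b u v w : ip G (a *: u + b *: v) w = a * ip G u w + b * ip G v w.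
Proof. by rewrite /ip !mulmxDl -!scalemxAl !mxE. Qed.

Lemma ricci_self_adjoint x y : ip G (x *m rho) y = ip G x (y *m rho).
Proof.
rewrite /ricci ip_mulmx_invmx /ip.
set Ric := \matrix_(i, j) _.
have Ric_sym : Ric^T = Ric.
  by apply/matrixP => i j; rewrite !mxE /ricci_form; apply: eq_bigr => k _; rewrite addrC.
by rewrite !trmx_mul trmx_inv G_sym Ric_sym !mulmxA -(mulmxA x G) mulmxV // mulmx1.
Qed.

Lemma self_adjoint_affine c a x y :
  ip G (x *m (c *: (rho - a%:M))) y = ip G x (y *m (c *: (rho - a%:M))).
Proof.
by rewrite !mulmx_affine ip_linear [RHS]ip_sym ip_linear ricci_self_adjoint !(ip_sym x).
Qed.

Hypothesis rho_JRC : jacobi_ricci_commuting G A.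

Lemma jacobi_ricci_Aev x v z : Aev A (x *m rho) v v z = Aev A x v v (z *m rho).
Proof.
have := congr1 (fun M => ip G (x *m M) z) (rho_JRC v).
by rewrite /= (mulmxA x (jacobi G A v)) (mulmxA x) ricci_self_adjoint !ip_jacobi.
Qed.

Lemma ricci_curvature_commute x y z w :
  Aev A (x *m rho) y z w = Aev A x y z (w *m rho).
Proof. exact: (curvature_commute_of_jacobi A_anti A_pair A_bianchi Aev_linear1 jacobi_ricci_Aev). Qed.

Lemma affine_ricci_commute c a x y z w :
  let J := c *: (rho - a%:M) in
  [/\ Aev A (x *m J) y z w = Aev A x (y *m J) z w,
      Aev A x (y *m J) z w = Aev A x y (z *m J) w
    & Aev A x y (z *m J) w = Aev A x y z (w *m J)].
Proof.
apply: (commute_all_slots A_anti A_pair (N := fun u => u *m _)) => u v s t.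
by rewrite !mulmx_affine (commute_affine A_anti A_pair Aev_linear1 ricci_curvature_commute).
Qed.
End Model.

Section RicciSpectrum.
Variables (R : realType) (n : nat) (G : 'M[R]_n.+1) (A : tensor4 R n.+1).
Local Notation rho := (ricci G A).

Lemma spec_single_scalar a : rho = a%:M -> spec_single G A a.
Proof.
by move=> rho_a l; rewrite /ricciC rho_a map_scalar_mx eigenvalue_scalar_mx; split=> [/eqP|->].
Qed.

Lemma einstein_simple_JRC : einstein G A -> simple_JRC G A /\ exists a, spec_single G A a.
Proof.
case=> a rho_a; have rho_spec := spec_single_scalar rho_a.
split; last by exists a.
split; first by move=> v; rewrite rho_a scalar_mxC.
split; last by left; exists a.
exists 1%:M; first exact: unitmx1.
by rewrite mul1mx invmx1 mulmx1 /ricciC rho_a map_scalar_mx scalar_mx_is_diag.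
Qed.

Lemma ricci_scalar_of_spec_single a :
  complex_diagonalizable G A -> spec_single G A a -> rho = a%:M.
Proof.
case=> P Pu Pdiag rho_spec.
have rho_roots l : eigenvalue (ricciC G A) l -> root ('X - (a%:C)%C%:P) l.
  by move/rho_spec ->; rewrite root_XsubC.
have := horner_mx_diagonalizable Pu Pdiag rho_roots.
rewrite rmorphB /= horner_mx_X horner_mx_C => /eqP; rewrite subr_eq0.
by rewrite /ricciC -map_scalar_mx => /eqP; apply: map_mx_inj.
Qed.

Lemma ricci_sqr_of_spec_pair a1 a2 :
    complex_diagonalizable G A -> spec_pair G A a1 a2 ->
  (rho - a1%:M) *m (rho - a1%:M) = - (a2 ^+ 2)%:M.
Proof.
case=> P Pu Pdiag rho_spec.
pose q := ('X - a1%:P) ^+ 2 + (a2 ^+ 2)%:P.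
have rho_roots l : eigenvalue (ricciC G A) l -> root (map_poly (real_complex R) q) l.
  move/rho_spec => l_eq; rewrite /root /q rmorphD rmorphXn rmorphB /= map_polyX !map_polyC /=.
  by rewrite !hornerE; apply/eqP; case: l_eq => ->; rewrite !expr2; simpc; rewrite addNr.
have := horner_mx_diagonalizable Pu Pdiag rho_roots.
rewrite /ricciC -map_horner_mx => /eqP; rewrite map_mx_eq0 /q rmorphD rmorphXn rmorphB /=.
by rewrite horner_mx_X !horner_mx_C addr_eq0 expr2 mulmxE => /eqP.
Qed.
End RicciSpectrum.

Theorem lemma4 (R : realType) (n : nat) (hn : (0 < n)%N)
    (G : 'M[R]_n) (A : tensor4 R n) :
  is_model G A ->
  (einstein G A <-> (simple_JRC G A /\ exists a1 : R, spec_single G A a1)) /\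
  (simple_JRC G A -> ~ einstein G A ->
   forall a1 a2 : R, 0 < a2 -> spec_pair G A a1 a2 ->
   let J := a2^-1 *: (ricci G A - a1%:M) in
   (forall x y : 'rV[R]_n, ip G (x *m J) y = ip G x (y *m J)) /\
   J *m J = - 1%:M /\
   (forall x y z w : 'rV[R]_n,
      Aev A (x *m J) y z w = Aev A x (y *m J) z w /\
      Aev A x (y *m J) z w = Aev A x y (z *m J) w /\
      Aev A x y (z *m J) w = Aev A x y z (w *m J)) /\
   ricci G A = a1%:M + a2 *: J).
Proof.
case: n hn G A => // n _ G A [[G_sym G_unit] A_act].
split.
  split; first exact: einstein_simple_JRC.
  by case=> [[_ [diag _]] [a rho_spec]]; exists a; exact: ricci_scalar_of_spec_single rho_spec.
move=> [JRC [diag _]] _ a1 a2 a2_gt0 rho_spec J.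
have a2_neq0 : a2 != 0 by rewrite gt_eqF.
split; first exact: self_adjoint_affine.
split.
  rewrite /J -scalemxAl -scalemxAr scalerA (ricci_sqr_of_spec_pair diag rho_spec).
  by rewrite scalerN scale_scalar_mx -expr2 -exprMn mulVf // expr1n.
split; last by rewrite /J scalerA mulfV // scale1r addrC subrK.
move=> x y z w.
by have [] := affine_ricci_commute G_sym G_unit A_act JRC a2^-1 a1 x y z w.
Qed.
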